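(* $\mathbf S(\mathbf{pAND}\cup\mathbf{11tAND}\cup\mathbf{11pOR}\cup\mathbf{tOR})=\mathbf S(\mathbf{pAND}\cup\mathbf{11pOR}\cup\mathbf{tOR})$.
   Context: Petri nets: $(P,T,F)$ with finite disjoint places $P$, transitions $T$, flow edges $F\subseteq(P\times T)\cup(T\times P)$; $\bullet x=\{y\mid(y,x)\in F\}$, $x\bullet=\{y\mid(x,y)\in F\}$. Workflow nets. A pWF net is $(P,T,F,I,O)$ with $(P,T,F)$ a Petri net, $I,O\subseteq P$ non-empty, every node reachable by a directed path from some node of $I$, and some node of $O$ reachable from every node. A tWF net is the same with $I,O$ non-empty subsets of $T$. Input nodes may have incoming edges and output nodes outgoing edges. A WF net is a pWF or tWF net; it is one-input (one-output) if $|I|=1$ ($|O|=1$). Substitution. Let $N=(P,T,F,I,O)$ and $M=(P',T',F',I',O')$ be WF nets with disjoint node sets. If $p\in P$ and $M$ is a pWF net, $N\otimes_p M$ is obtained from $N$ by deleting $p$ and all edges incident to $p$, adding all nodes and edges of $M$, adding an edge $(t,p')$ for each $t\in\bullet_N p$ and each $p'\in I'$, and an edge $(p',t)$ for each $p'\in O'$ and each $t\in p\bullet_N$; its input set is $(I\setminus\{p\})\cup I'$ if $p\in I$ and $I$ otherwise, and its output set is $(O\setminus\{p\})\cup O'$ if $p\in O$ and $O$ otherwise. If $t\in T$ and $M$ is a tWF net, $N\otimes_t M$ is defined analogously: delete $t$ and its edges, add $M$, add $(q,t')$ for each $q\in\bullet_N t$, $t'\in I'$, and $(t',q)$ for each $t'\in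 O'$, $q\in t\bullet_N$, with input/output sets updated in the same way. The substitution closure $\mathbf S(C)$ of a class $C$ of WF nets is the smallest superclass of $C$ such that whenever $N,M\in\mathbf S(C)$ are disjoint, $N\otimes_p M\in\mathbf S(C)$ for every place $p$ of $N$ if $M$ is a pWF net, and $N\otimes_t M\in\mathbf S(C)$ for every transition $t$ of $N$ if $M$ is a tWF net. AND and OR nets. An AND net is an acyclic WF net $(P,T,F,I,O)$ such that for every place $p$: (1) either $p\in I$ and $|\bullet p|=0$, or $p\notin I$ and $|\bullet p|=1$; and (2) either $p\in O$ and $|p\bullet|=0$, or $p\notin O$ and $|p\bullet|=1$. An OR net is a (possibly cyclic) WF net such that for every transition $t$: (1) either $t\in I$ and $|\bullet t|=0$, or $t\notin I$ and $|\bullet t|=1$; and (2) either $t\in O$ and $|t\bullet|=0$, or $t\notin O$ and $|t\bullet|=1$. A pAND (tAND, pOR, tOR) net is an AND (AND, OR, OR) net that is a pWF (tWF, pWF, tWF) net. $\mathbf{pAND}$ is the class of pAND nets, $\mathbf{11tAND}$ the class of one-input one-output tAND nets, $\mathbf{11pOR}$ the class of one-input one-output pOR nets, and $\mathbf{tOR}$ the class of tOR nets. *)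

(* Nodes are natural numbers (an infinite name supply, so that
   disjoint copies always exist); sets of nodes are predicates nat -> Prop. *)
From Stdlib Require Import List Relations.
Import ListNotations.

Record net := Net {
  Pl : nat -> Prop;
  Tr : nat -> Prop;
  Fl : nat -> nat -> Prop;
  In_ : nat -> Prop;
  Out : nat -> Prop
}.

Definition node (N : net) (x : nat) : Prop := Pl N x \/ Tr N x.

Definition petri_net (N : net) : Prop :=
  (exists l : list nat, forall x, node N x -> In x l) /\
  (forall x, ~ (Pl N x /\ Tr N x)) /\
  (forall x y, Fl N x y -> (Pl N x /\ Tr N y) \/ (Tr N x /\ Pl N y)).

Definition nonempty (A : nat -> Prop) : Prop := exists x, A x.
Definition subset (A B : nat -> Prop) : Prop := forall x, A x -> B x.

Definition reach (N : net) : nat -> nat -> Prop := clos_refl_trans nat (Fl N).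

Definition wf_with (K : net -> nat -> Prop) (N : net) : Prop :=
  petri_net N /\
  nonempty (In_ N) /\ subset (In_ N) (K N) /\
  nonempty (Out N) /\ subset (Out N) (K N) /\
  (forall x, node N x -> exists i, In_ N i /\ reach N i x) /\
  (forall x, node N x -> exists o, Out N o /\ reach N x o).

Definition pWF (N : net) : Prop := wf_with Pl N.
Definition tWF (N : net) : Prop := wf_with Tr N.
Definition WF (N : net) : Prop := pWF N \/ tWF N.

Definition one_input (N : net) : Prop := exists i, forall x, In_ N x <-> x = i.
Definition one_output (N : net) : Prop := exists o, forall x, Out N x <-> x = o.

Definition acyclic (N : net) : Prop := forall x, ~ clos_trans nat (Fl N) x x.

Definition card0 (R : nat -> Prop) : Prop := forall y, ~ R y.
Definition card1 (R : nat -> Prop) : Prop := exists y, R y /\ forall z, R z -> z = y.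

Definition pre (N : net) (x : nat) : nat -> Prop := fun y => Fl N y x.
Definition post (N : net) (x : nat) : nat -> Prop := fun y => Fl N x y.

Definition AND_net (N : net) : Prop :=
  WF N /\ acyclic N /\
  (forall p, Pl N p ->
     ((In_ N p /\ card0 (pre N p)) \/ (~ In_ N p /\ card1 (pre N p))) /\
     ((Out N p /\ card0 (post N p)) \/ (~ Out N p /\ card1 (post N p)))).

Definition OR_net (N : net) : Prop :=
  WF N /\
  (forall t, Tr N t ->
     ((In_ N t /\ card0 (pre N t)) \/ (~ In_ N t /\ card1 (pre N t))) /\
     ((Out N t /\ card0 (post N t)) \/ (~ Out N t /\ card1 (post N t)))).

Definition pAND (N : net) : Prop := AND_net N /\ pWF N.
Definition tAND (N : net) : Prop := AND_net N /\ tWF N.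
Definition pOR  (N : net) : Prop := OR_net N /\ pWF N.
Definition tOR  (N : net) : Prop := OR_net N /\ tWF N.
Definition c11tAND (N : net) : Prop := tAND N /\ one_input N /\ one_output N.
Definition c11pOR  (N : net) : Prop := pOR N /\ one_input N /\ one_output N.

Definition disjoint (N M : net) : Prop := forall x, ~ (node N x /\ node M x).

(* N ⊗_n M : replace node n of N by M (same formula for places and transitions). *)
Definition subst (N : net) (n : nat) (M : net) : net := {|
  Pl  := fun x => (Pl N x /\ x <> n) \/ Pl M x;
  Tr  := fun x => (Tr N x /\ x <> n) \/ Tr M x;
  Fl  := fun x y => (Fl N x y /\ x <> n /\ y <> n) \/ Fl M x y \/
                    (Fl N x n /\ In_ M y) \/ (Out M x /\ Fl N n y);
  In_ := fun x => (In_ N x /\ x <> n) \/ (In_ N n /\ In_ M x);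
  Out := fun x => (Out N x /\ x <> n) \/ (Out N n /\ Out M x)
|}.

Definition union (C D : net -> Prop) : net -> Prop := fun N => C N \/ D N.

Inductive Sclos (C : net -> Prop) : net -> Prop :=
| S_base : forall N, C N -> Sclos C N
| S_place : forall N M p, Sclos C N -> Sclos C M -> disjoint N M ->
    Pl N p -> pWF M -> Sclos C (subst N p M)
| S_trans : forall N M t, Sclos C N -> Sclos C M -> disjoint N M ->
    Tr N t -> tWF M -> Sclos C (subst N t M).

(* A one-input one-output tAND net is already in the substitution closure
   S(pAND ∪ 11pOR ∪ tOR); hence adding 11tAND to the base class does not
   enlarge the closure, which gives the theorem by monotonicity of S.

   Let N be a 11tAND net with input transition i and output transition o.
   Acyclicity forces i to have no incoming and o no outgoing edge.
   - If i = o, N has no edges at all and is a single transition: a tOR net.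
   - If i <> o, let q be a fresh node and consider the tOR net
       chain i q o  =  i -> q -> o.
     Removing i and o from N leaves its interior: a pAND net whose inputs are
     the places fed by i and whose outputs are the places feeding o.  Substituting
     the interior for q in the chain gives back N exactly, so N lies in the
     closure. *)

From Stdlib Require Import List Relations Arith Lia FunctionalExtensionality
  PropExtensionality.
Import ListNotations.

Lemma Sclos_mono (C D : net -> Prop) :
  (forall N, C N -> Sclos D N) -> forall N, Sclos C N -> Sclos D N.
Proof.
  intros HCD N HN; induction HN.
  - auto.
  - apply S_place; auto.
  - apply S_trans; auto.
Qed.

Lemma rt_first {A} (R : relation A) a b : clos_refl_trans A R a b ->
  a = b \/ exists c, R a c /\ clos_refl_trans A R c b.
Proof.
  intro H; apply clos_rt_rt1n in H; destruct H as [|y z Hxy Hyz].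
  - left; reflexivity.
  - right; exists y; split; [exact Hxy | apply clos_rt1n_rt, Hyz].
Qed.

Lemma rt_last {A} (R : relation A) a b : clos_refl_trans A R a b ->
  a = b \/ exists c, clos_refl_trans A R a c /\ R c b.
Proof.
  intro H; apply clos_rt_rtn1 in H; destruct H as [|y z Hyz Hxy].
  - left; reflexivity.
  - right; exists y; split; [apply clos_rtn1_rt, Hxy | exact Hyz].
Qed.

Lemma rt_restrict {A} (R S : relation A) a b : clos_refl_trans A R a b ->
  (forall u v, R u v -> clos_refl_trans A R a u -> clos_refl_trans A R v b -> S u v) ->
  clos_refl_trans A S a b.
Proof.
  intro H; apply clos_rt_rt1n in H.
  induction H as [|x y z Hxy Hyz IH]; intros HS.
  - apply rt_refl.
  - apply rt_trans with y.
    + apply rt_step, HS; [exact Hxy | apply rt_refl | apply clos_rt1n_rt, Hyz].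
    + apply IH; intros u v Ruv Hyu Hvz; apply HS; auto.
      apply rt_trans with y; [apply rt_step, Hxy | exact Hyu].
Qed.

Lemma clos_trans_mono {A} (R S : relation A) :
  (forall x y, R x y -> S x y) -> forall x y, clos_trans A R x y -> clos_trans A S x y.
Proof.
  intros HRS x y H; induction H as [x y H|x y z _ IHxy _ IHyz].
  - apply t_step, HRS, H.
  - apply t_trans with y; assumption.
Qed.

Lemma exists_fresh_node (N : net) : petri_net N -> exists q, ~ node N q.
Proof.
  intros [[l Hl] _].
  assert (Hbound : exists n, forall x, In x l -> x < n).
  { clear Hl; induction l as [|a l [n Hn]].
    - exists 0; intros x [].
    - exists (S (max a n)); intros x [<-|Hx]; [lia | specialize (Hn x Hx); lia]. }
  destruct Hbound as [n Hn]; exists n; intro Hnode.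
  specialize (Hn n (Hl n Hnode)); lia.
Qed.

Lemma net_ext (N1 N2 : net) :
  (forall x, Pl N1 x <-> Pl N2 x) -> (forall x, Tr N1 x <-> Tr N2 x) ->
  (forall x y, Fl N1 x y <-> Fl N2 x y) -> (forall x, In_ N1 x <-> In_ N2 x) ->
  (forall x, Out N1 x <-> Out N2 x) -> N1 = N2.
Proof.
  destruct N1, N2; simpl; intros HP HT HF HI HO; f_equal;
    repeat (apply functional_extensionality; intro);
    apply propositional_extensionality; auto.
Qed.

Definition chain (i q o : nat) : net := {|
  Pl := fun x => x = q;
  Tr := fun x => x = i \/ x = o;
  Fl := fun x y => (x = i /\ y = q) \/ (x = q /\ y = o);
  In_ := fun x => x = i;
  Out := fun x => x = o |}.

Lemma chain_tWF i q o : q <> i -> q <> o -> i <> o -> tWF (chain i q o).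
Proof.
  intros Hqi Hqo Hio.
  assert (Hiq : reach (chain i q o) i q) by (apply rt_step; left; auto).
  assert (Hqo' : reach (chain i q o) q o) by (apply rt_step; right; auto).
  unfold tWF, wf_with, petri_net, nonempty, subset, node; simpl.
  repeat split.
  - exists [q; i; o]; simpl; intros x [->|[->| ->]]; tauto.
  - intros x [-> [H| H]]; congruence.
  - intros x y [[-> ->]|[-> ->]]; tauto.
  - exists i; reflexivity.
  - intros x ->; left; reflexivity.
  - exists o; reflexivity.
  - intros x ->; right; reflexivity.
  - intros x Hx; exists i; split; [reflexivity|].
    destruct Hx as [->|[->| ->]]; [exact Hiq | apply rt_refl | eapply rt_trans; eauto].
  - intros x Hx; exists o; split; [reflexivity|].
    destruct Hx as [->|[->| ->]]; [exact Hqo' | eapply rt_trans; eauto | apply rt_refl].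
Qed.

Lemma chain_tOR i q o : q <> i -> q <> o -> i <> o -> tOR (chain i q o).
Proof.
  intros Hqi Hqo Hio.
  pose proof (chain_tWF i q o Hqi Hqo Hio) as Hwf.
  split; [split; [right; exact Hwf|] | exact Hwf].
  unfold card0, card1, pre, post; simpl; intros t [->| ->]; split.
  - left; split; [reflexivity | intros y [[_ H]|[_ H]]; congruence].
  - right; split; [congruence|]; exists q; split; [left; auto|].
    intros z [[_ H]|[H _]]; congruence.
  - right; split; [congruence|]; exists q; split; [right; auto|].
    intros z [[_ H]|[H _]]; congruence.
  - left; split; [reflexivity | intros y [[H _]|[H _]]; congruence].
Qed.

Definition interior (N : net) (i o : nat) : net := {|
  Pl := Pl N;
  Tr := fun x => Tr N x /\ x <> i /\ x <> o;
  Fl := fun x y => Fl N x y /\ x <> i /\ y <> i /\ x <> o /\ y <> o;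
  In_ := fun p => Pl N p /\ Fl N i p;
  Out := fun p => Pl N p /\ Fl N p o |}.

Section OneInputOneOutputTAnd.

Variables (N : net) (i o : nat).
Hypothesis N_tAND : tAND N.
Hypothesis N_input : forall x, In_ N x <-> x = i.
Hypothesis N_output : forall x, Out N x <-> x = o.

Lemma N_petri : petri_net N.
Proof. destruct N_tAND as [_ [HP _]]; exact HP. Qed.

Lemma N_acyclic : acyclic N.
Proof. destruct N_tAND as [[_ [HA _]] _]; exact HA. Qed.

Lemma flow_kinds x y : Fl N x y -> (Pl N x /\ Tr N y) \/ (Tr N x /\ Pl N y).
Proof. destruct N_petri as [_ [_ HF]]; apply HF. Qed.

Lemma flow_nodes x y : Fl N x y -> node N x /\ node N y.
Proof. intro H; unfold node; destruct (flow_kinds x y H); tauto. Qed.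

Lemma place_not_trans x : Pl N x -> ~ Tr N x.
Proof. destruct N_petri as [_ [HD _]]; intros HP HT; exact (HD x (conj HP HT)). Qed.

Lemma input_trans : Tr N i.
Proof. destruct N_tAND as [_ [_ [_ [HI _]]]]; apply HI, N_input; reflexivity. Qed.

Lemma output_trans : Tr N o.
Proof. destruct N_tAND as [_ [_ [_ [_ [_ [HO _]]]]]]; apply HO, N_output; reflexivity. Qed.

Lemma place_ne_ends p : Pl N p -> p <> i /\ p <> o.
Proof.
  intro Hp; split; intros ->;
    [exact (place_not_trans _ Hp input_trans) | exact (place_not_trans _ Hp output_trans)].
Qed.

Lemma reach_from_input x : node N x -> reach N i x.
Proof.
  destruct N_tAND as [_ [_ [_ [_ [_ [_ [RI _]]]]]]].
  intro Hx; destruct (RI x Hx) as [i' [Hi' R]]; apply N_input in Hi'; subst; exact R.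
Qed.

Lemma reach_to_output x : node N x -> reach N x o.
Proof.
  destruct N_tAND as [_ [_ [_ [_ [_ [_ [_ RO]]]]]]].
  intro Hx; destruct (RO x Hx) as [o' [Ho' R]]; apply N_output in Ho'; subst; exact R.
Qed.

Lemma no_flow_into_input y : ~ Fl N y i.
Proof.
  intro H; apply (N_acyclic i), clos_rt_t with y; [|apply t_step, H].
  apply reach_from_input, (flow_nodes _ _ H).
Qed.

Lemma no_flow_out_of_output y : ~ Fl N o y.
Proof.
  intro H; apply (N_acyclic y), clos_rt_t with o; [|apply t_step, H].
  apply reach_to_output, (flow_nodes _ _ H).
Qed.

Lemma reach_into_input u : reach N u i -> u = i.
Proof.
  intro H; destruct (rt_last _ _ _ H) as [|[c [_ Hc]]]; [assumption|].
  destruct (no_flow_into_input _ Hc).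
Qed.

Lemma reach_from_output v : reach N o v -> v = o.
Proof.
  intro H; destruct (rt_first _ _ _ H) as [|[c [Hc _]]]; [symmetry; assumption|].
  destruct (no_flow_out_of_output _ Hc).
Qed.

Lemma no_flow_if_input_is_output : i = o -> forall u v, ~ Fl N u v.
Proof.
  intros Hio u v H; destruct (flow_nodes _ _ H) as [Hu Hv].
  apply (N_acyclic v), clos_rt_t with u; [|apply t_step, H].
  apply rt_trans with o; [apply reach_to_output, Hv|].
  rewrite <- Hio; apply reach_from_input, Hu.
Qed.

Lemma single_transition_tOR : i = o -> tOR N.
Proof.
  intro Hio; pose proof (no_flow_if_input_is_output Hio) as noflow.
  pose proof (proj2 N_tAND) as Hwf.
  split; [split; [right; exact Hwf|] | exact Hwf].
  intros t Ht.
  assert (t = i) as ->.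
  { destruct (rt_first _ _ _ (reach_from_input t (or_intror Ht))) as [|[c [Hc _]]];
      [congruence | destruct (noflow _ _ Hc)]. }
  unfold card0; split; left; split; try (intros y Hy; eapply noflow, Hy).
  - apply N_input; reflexivity.
  - apply N_output; exact Hio.
Qed.

Notation M := (interior N i o).

Lemma interior_node x : node M x -> node N x /\ x <> i /\ x <> o.
Proof.
  unfold node; simpl; intros [Hx|[Hx Hends]]; [|tauto].
  pose proof (place_ne_ends x Hx); tauto.
Qed.

Lemma interior_path u v : reach N u v -> u <> i -> v <> o -> reach M u v.
Proof.
  intros H Hu Hv; apply rt_restrict with (1 := H); intros s t Hst Hus Htv.
  simpl; repeat split; try exact Hst; intros ->.
  - exact (Hu (reach_into_input _ Hus)).
  - exact (no_flow_into_input _ Hst).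
  - exact (no_flow_out_of_output _ Hst).
  - exact (Hv (reach_from_output _ Htv)).
Qed.

Lemma first_step_from_input x : node N x -> x <> i ->
  exists c, Pl N c /\ Fl N i c /\ reach N c x.
Proof.
  intros Hx Hxi; destruct (rt_first _ _ _ (reach_from_input x Hx)) as [|[c [Hc Hcx]]];
    [congruence|].
  exists c; repeat split; [|exact Hc|exact Hcx].
  destruct (flow_kinds _ _ Hc) as [[HP _]|[_ HP]]; [destruct (place_not_trans _ HP input_trans) | exact HP].
Qed.

Lemma last_step_to_output x : node N x -> x <> o ->
  exists c, Pl N c /\ Fl N c o /\ reach N x c.
Proof.
  intros Hx Hxo; destruct (rt_last _ _ _ (reach_to_output x Hx)) as [|[c [Hxc Hc]]];
    [congruence|].
  exists c; repeat split; [|exact Hc|exact Hxc].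
  destruct (flow_kinds _ _ Hc) as [[HP _]|[_ HP]]; [exact HP | destruct (place_not_trans _ HP output_trans)].
Qed.

Lemma interior_petri : petri_net M.
Proof.
  destruct N_petri as [[l Hl] [HD HF]]; split; [|split].
  - exists l; intros x Hx; apply Hl, (interior_node x Hx).
  - intros x [HP [HT _]]; exact (HD x (conj HP HT)).
  - intros x y [H Hends]; simpl; destruct (HF x y H); tauto.
Qed.

Lemma interior_pWF : i <> o -> pWF M.
Proof.
  intro Hio; split; [exact interior_petri|].
  unfold nonempty, subset; simpl; repeat split; try tauto.
  - destruct (first_step_from_input o (or_intror output_trans)) as [c [Hc [Hic _]]];
      [congruence|]; exists c; tauto.
  - destruct (last_step_to_output i (or_intror input_trans)) as [c [Hc [Hco _]]];
      [exact Hio|]; exists c; tauto.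
  - intros x Hx; destruct (interior_node x Hx) as [HxN [Hxi Hxo]].
    destruct (first_step_from_input x HxN Hxi) as [c [Hc [Hic Hcx]]].
    exists c; split; [tauto|].
    apply interior_path; [exact Hcx | apply (place_ne_ends c Hc) | exact Hxo].
  - intros x Hx; destruct (interior_node x Hx) as [HxN [Hxi Hxo]].
    destruct (last_step_to_output x HxN Hxo) as [c [Hc [Hco Hxc]]].
    exists c; split; [tauto|].
    apply interior_path; [exact Hxc | exact Hxi | apply (place_ne_ends c Hc)].
Qed.

(* The unique predecessor of a place is i (making it an input of the
   interior) or survives in the interior; dually for successors. *)
Lemma interior_pre_condition p : Pl N p ->
  (In_ M p /\ card0 (pre M p)) \/ (~ In_ M p /\ card1 (pre M p)).
Proof.
  intro Hp; destruct (place_ne_ends p Hp) as [Hpi Hpo].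
  destruct N_tAND as [[_ [_ Hplace]] _].
  destruct (proj1 (Hplace p Hp)) as [[HI _]|[_ [y [Hy Huniq]]]];
    [apply N_input in HI; congruence|].
  unfold card0, card1, pre; simpl.
  destruct (Nat.eq_dec y i) as [->|Hyi].
  - left; split; [tauto|]; intros z [Hz [Hzi _]]; exact (Hzi (Huniq z Hz)).
  - right; split; [intros [_ Hf]; exact (Hyi (eq_sym (Huniq i Hf)))|].
    exists y; split; [|intros z [Hz _]; exact (Huniq z Hz)].
    repeat split; auto; intros ->; exact (no_flow_out_of_output _ Hy).
Qed.

Lemma interior_post_condition p : Pl N p ->
  (Out M p /\ card0 (post M p)) \/ (~ Out M p /\ card1 (post M p)).
Proof.
  intro Hp; destruct (place_ne_ends p Hp) as [Hpi Hpo].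
  destruct N_tAND as [[_ [_ Hplace]] _].
  destruct (proj2 (Hplace p Hp)) as [[HO _]|[_ [y [Hy Huniq]]]];
    [apply N_output in HO; congruence|].
  unfold card0, card1, post; simpl.
  destruct (Nat.eq_dec y o) as [->|Hyo].
  - left; split; [tauto|]; intros z [Hz [_ [_ [_ Hzo]]]]; exact (Hzo (Huniq z Hz)).
  - right; split; [intros [_ Hf]; exact (Hyo (eq_sym (Huniq o Hf)))|].
    exists y; split; [|intros z [Hz _]; exact (Huniq z Hz)].
    repeat split; auto; intros ->; exact (no_flow_into_input _ Hy).
Qed.

Lemma interior_pAND : i <> o -> pAND M.
Proof.
  intro Hio; pose proof (interior_pWF Hio) as Hwf.
  split; [|exact Hwf]; split; [left; exact Hwf|]; split.
  - intros x Hx; apply (N_acyclic x).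
    exact (clos_trans_mono _ _ (fun u v H => proj1 H) x x Hx).
  - intros p Hp; split; [apply interior_pre_condition | apply interior_post_condition];
      exact Hp.
Qed.

Lemma chain_interior_subst q : ~ node N q -> subst (chain i q o) q M = N.
Proof.
  intro Hq.
  assert (Hqi : q <> i) by (intros ->; exact (Hq (or_intror input_trans))).
  assert (Hqo : q <> o) by (intros ->; exact (Hq (or_intror output_trans))).
  apply net_ext; simpl.
  - intro x; split; [intros [[-> Hne]|Hx]; [congruence | exact Hx] | auto].
  - intro x; split.
    + intros [[[->| ->] _]|[Hx _]]; [exact input_trans | exact output_trans | exact Hx].
    + intro Hx; destruct (Nat.eq_dec x i) as [->|Hxi]; [left; auto|].
      destruct (Nat.eq_dec x o) as [->|Hxo]; [left; auto | right; auto].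
  - intros x y; split.
    + intros [[[[_ ->]|[-> _]] [Hx Hy]]|[[H _]|[[[[-> _]|[_ ->]] [_ H]]|[[_ H] [[-> _]|[_ ->]]]]]];
        congruence || exact H.
    + intro Hxy; destruct (Nat.eq_dec x i) as [->|Hxi].
      { right; right; left; split; [left; auto|]; split; [|exact Hxy].
        destruct (flow_kinds _ _ Hxy) as [[HP _]|[_ HP]];
          [destruct (place_not_trans _ HP input_trans) | exact HP]. }
      destruct (Nat.eq_dec y o) as [->|Hyo].
      { right; right; right; split; [|right; auto]; split; [|exact Hxy].
        destruct (flow_kinds _ _ Hxy) as [[HP _]|[_ HP]];
          [exact HP | destruct (place_not_trans _ HP output_trans)]. }
      right; left; repeat split; auto; intros ->;
        [exact (no_flow_into_input _ Hxy) | exact (no_flow_out_of_output _ Hxy)].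
  - intro x; rewrite N_input; split; [intros [[-> _]|[H _]]; congruence | intros ->; left; auto].
  - intro x; rewrite N_output; split; [intros [[-> _]|[H _]]; congruence | intros ->; left; auto].
Qed.

Lemma chain_interior_disjoint q : ~ node N q -> disjoint (chain i q o) M.
Proof.
  intros Hq x [Hx1 Hx2]; destruct (interior_node x Hx2) as [HxN [Hxi Hxo]].
  destruct Hx1 as [->|[->| ->]]; auto.
Qed.

Lemma in_closure_without_11tAND : Sclos (union pAND (union c11pOR tOR)) N.
Proof.
  destruct (Nat.eq_dec i o) as [Hio|Hio].
  { apply S_base; right; right; exact (single_transition_tOR Hio). }
  destruct (exists_fresh_node N N_petri) as [q Hq].
  assert (Hqi : q <> i) by (intros ->; exact (Hq (or_intror input_trans))).
  assert (Hqo : q <> o) by (intros ->; exact (Hq (or_intror output_trans))).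
  rewrite <- (chain_interior_subst q Hq).
  apply S_place.
  - apply S_base; right; right; exact (chain_tOR i q o Hqi Hqo Hio).
  - apply S_base; left; exact (interior_pAND Hio).
  - exact (chain_interior_disjoint q Hq).
  - reflexivity.
  - exact (interior_pWF Hio).
Qed.

End OneInputOneOutputTAnd.

Lemma c11tAND_in_closure (N : net) :
  c11tAND N -> Sclos (union pAND (union c11pOR tOR)) N.
Proof.
  intros [HtAND [[i Hi] [o Ho]]]; exact (in_closure_without_11tAND N i o HtAND Hi Ho).
Qed.

Theorem mainTheorem2 :
  forall N : net,
    Sclos (union pAND (union c11tAND (union c11pOR tOR))) N <->
    Sclos (union pAND (union c11pOR tOR)) N.
Proof.
  intro N; split; apply Sclos_mono; clear N; intros N HN.
  - destruct HN as [H|[H|H]].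
    + apply S_base; left; exact H.
    + exact (c11tAND_in_closure N H).
    + apply S_base; right; exact H.
  - apply S_base; destruct HN as [H|H]; [left | right; right]; exact H.
Qed.
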